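(* Let $\Lambda\in\{\mathsf{CS4},\mathsf{IS4},\mathsf{S4I},\mathsf{GS4}\}$ and let $\varphi$ be a formula. (1) If $\Lambda\neq\mathsf{S4I}$ and $\varphi$ is satisfiable (resp. falsifiable) in a shallow $\Lambda$-model, then $\varphi$ is satisfiable (resp. falsifiable) in a $\Lambda$-model with finitely many worlds. (2) If $\Lambda=\mathsf{S4I}$ and $\varphi$ is satisfiable (resp. falsifiable) in a shallow, forest-like $\mathsf{S4I}$-model, then $\varphi$ is satisfiable (resp. falsifiable) in an $\mathsf{S4I}$-model with finitely many worlds.
   Context: Formulas over a countably infinite set $\mathbb P$ of variables: $p\mid\bot\mid\varphi\wedge\psi\mid\varphi\vee\psi\mid\varphi\to\psi\mid\Diamond\varphi\mid\Box\varphi$. A bi-intuitionistic frame is $(W,W_\bot,\preccurlyeq,\sqsubseteq)$ with $\preccurlyeq,\sqsubseteq$ preorders on $W$ and $W_\bot\subseteq W$ upward closed under both; infallible if $W_\bot=\varnothing$. A valuation $V:\mathbb P\to 2^W$ has each $V(p)$ upward closed under $\preccurlyeq$ and containing $W_\bot$; a model is $\mathcal M=(W,W_\bot,\preccurlyeq,\sqsubseteq,V)$. Satisfaction: $p$ iff $w\in V(p)$; $\bot$ iff $w\in W_\bot$; $\wedge,\vee$ pointwise; $w\models\varphi\to\psi$ iff for all $v\succcurlyeq w$, $v\models\varphi$ implies $v\models\psi$; $w\models\Diamond\varphi$ iff for all $u\succcurlyeq w$ there is $v\sqsupseteq u$ with $v\models\varphi$; $w\models\Box\varphi$ iff $v\models\varphi$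 whenever $w\preccurlyeq u\sqsubseteq v$. $\varphi$ is satisfiable (falsifiable) in $\mathcal M$ if $(\mathcal M,w)\models\varphi$ (resp. $\not\models$) for some $w\in W\setminus W_\bot$. $\sqsubseteq$ is forward confluent if $w\preccurlyeq w'$, $w\sqsubseteq v$ imply some $v'$ with $v\preccurlyeq v'$, $w'\sqsubseteq v'$; backward confluent if $w\sqsubseteq v\preccurlyeq v'$ implies some $w'$ with $w\preccurlyeq w'\sqsubseteq v'$; downward confluent if $w\preccurlyeq v\sqsubseteq v'$ implies some $w'$ with $w\sqsubseteq w'\preccurlyeq v'$. Locally linear: $w\preccurlyeq u$, $w\preccurlyeq v$ imply $u\preccurlyeq v$ or $v\preccurlyeq u$. $\mathsf{CS4}$-frames: backward confluent. $\mathsf{IS4}$-frames: infallible, forward and backward confluent. $\mathsf{GS4}$-frames: locally linear $\mathsf{IS4}$-frames. $\mathsf{S4I}$-frames: infallible, forward and downward confluent. A $\Lambda$-model is a model on a $\Lambda$-frame. Write $w\prec v$ if $w\preccurlyeq v$ and $v\not\preccurlyeq w$. The height of $w$ is the supremum of all $n$ for which there is a chain $w=w_0\prec w_1\prec\cdots\prec w_n$; the height of the model is the supremum of the heights of its worlds; the model is shallow if its height is finite. The model is forest-like if for every $w\in W$ the set $\{v\in W: v\preccurlyeq w\}$ is totally ordered by $\preccurlyeq$. *)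

From Stdlib Require Import List Arith.

Inductive form : Type :=
| Var : nat -> form
| Bot : form
| And : form -> form -> form
| Or  : form -> form -> form
| Imp : form -> form -> form
| Dia : form -> form
| Box : form -> form.

Definition preorder {W : Type} (R : W -> W -> Prop) : Prop :=
  (forall w, R w w) /\ (forall u v w, R u v -> R v w -> R u w).

Record model : Type := Model {
  world : Type;
  wbot : world -> Prop;
  ile : world -> world -> Prop;
  mle : world -> world -> Prop;
  val : nat -> world -> Prop;
  ile_pre : preorder ile;
  mle_pre : preorder mle;
  wbot_up_ile : forall w v, wbot w -> ile w v -> wbot v;
  wbot_up_mle : forall w v, wbot w -> mle w v -> wbot v;
  val_up : forall p w v, val p w -> ile w v -> val p v;
  val_bot : forall p w, wbot w -> val p w
}.

Fixpoint sat (M : model) (w : world M) (phi : form) : Prop :=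
  match phi with
  | Var p => val M p w
  | Bot => wbot M w
  | And a b => sat M w a /\ sat M w b
  | Or a b => sat M w a \/ sat M w b
  | Imp a b => forall v, ile M w v -> sat M v a -> sat M v b
  | Dia a => forall u, ile M w u -> exists v, mle M u v /\ sat M v a
  | Box a => forall u v, ile M w u -> mle M u v -> sat M v a
  end.

Definition satisfiable (M : model) (phi : form) : Prop :=
  exists w : world M, ~ wbot M w /\ sat M w phi.
Definition falsifiable (M : model) (phi : form) : Prop :=
  exists w : world M, ~ wbot M w /\ ~ sat M w phi.

Definition infallible (M : model) : Prop := forall w, ~ wbot M w.
Definition forward_confluent (M : model) : Prop :=
  forall w w' v, ile M w w' -> mle M w v -> exists v', ile M v v' /\ mle M w' v'.
Definition backward_confluent (M : model) : Prop :=
  forall w v v', mle M w v -> ile M v v' -> exists w', ile M w w' /\ mle M w' v'.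
Definition downward_confluent (M : model) : Prop :=
  forall w v v', ile M w v -> mle M v v' -> exists w', mle M w w' /\ ile M w' v'.
Definition locally_linear (M : model) : Prop :=
  forall w u v, ile M w u -> ile M w v -> ile M u v \/ ile M v u.

Inductive logic : Type := CS4 | IS4 | S4I | GS4.

Definition is_model_of (L : logic) (M : model) : Prop :=
  match L with
  | CS4 => backward_confluent M
  | IS4 => infallible M /\ forward_confluent M /\ backward_confluent M
  | GS4 => (infallible M /\ forward_confluent M /\ backward_confluent M)
           /\ locally_linear M
  | S4I => infallible M /\ forward_confluent M /\ downward_confluent M
  end.

Definition ilt (M : model) (w v : world M) : Prop := ile M w v /\ ~ ile M v w.

Definition shallow (M : model) : Prop :=
  exists N : nat, forall (n : nat) (c : nat -> world M),
    (forall i, i < n -> ilt M (c i) (c (S i))) -> n <= N.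

Definition forest_like (M : model) : Prop :=
  forall w u v, ile M u w -> ile M v w -> ile M u v \/ ile M v u.

Definition finite_model (M : model) : Prop :=
  exists l : list (world M), forall w, In w l.

From Stdlib Require Import List Arith Lia Classical FunctionalExtensionality
  PropExtensionality ProofIrrelevance.
Import ListNotations.

(* The proof is a filtration through a finite labelling. In a model M of height at most N,
   each world x receives a base label recording falsity, the subformulas of phi true at x
   or reachable from x along the modal order, and the lengths of strict chains starting or
   ending at x. Iterating "label, together with the types of all intuitionistic successors
   and of the worlds in between" N+1 times gives a type of finite range; since the height
   is bounded the iteration stabilises (tp_stable), so worlds of equal type satisfy the
   zig condition for the intuitionistic order (tp_zig). For S4I the type also records the
   types of all worlds below x, which in a forest yields the zag condition needed for
   downward confluence.
   The quotient of M by such a labelling (quotient), whose modal order is the union of all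
   confluent relations contained in "equal or admissible", is a finite model of the same
   logic and a world satisfies the same subformulas of phi as its class (quotient_truth). *)

Definition finite_range {A B : Type} (f : A -> B) : Prop :=
  exists l : list B, forall a, In (f a) l.

Lemma pred_ext {X : Type} (P Q : X -> Prop) : (forall x, P x <-> Q x) -> P = Q.
Proof.
  intros H. apply functional_extensionality; intros x.
  apply propositional_extensionality; auto.
Qed.

Lemma prop_true_or_false (P : Prop) : P = True \/ P = False.
Proof.
  destruct (classic P) as [H|H]; [left|right]; apply propositional_extensionality; tauto.
Qed.

Lemma finite_range_truth_vector {A : Type} (Ps : list (A -> Prop)) :
  finite_range (fun a => map (fun P => P a) Ps).
Proof.
  induction Ps as [|P Ps [l Hl]]; simpl.
  - exists [[]]; simpl; auto.
  - exists (flat_map (fun t => [True :: t; False :: t]) l). intros a.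
    apply in_flat_map. exists (map (fun P => P a) Ps). split; auto.
    destruct (prop_true_or_false (P a)) as [-> | ->]; simpl; auto.
Qed.

Fixpoint sublists {B : Type} (l : list B) : list (list B) :=
  match l with
  | [] => [[]]
  | b :: t => sublists t ++ map (cons b) (sublists t)
  end.

Lemma sublist_of_pred {B : Type} (l : list B) : forall P : B -> Prop,
  (forall b, P b -> In b l) -> exists s, In s (sublists l) /\ forall b, P b <-> In b s.
Proof.
  induction l as [|h t IH]; intros P HP; simpl.
  - exists []. split; auto. intros b; split; [intros Hb; destruct (HP b Hb) | intros []].
  - destruct (IH (fun b => P b /\ b <> h)) as [s [Hs Hs']].
    { intros b [Hb Hne]. destruct (HP b Hb); [congruence | auto]. }
    destruct (classic (P h)) as [Ph|nPh].
    + exists (h :: s). split; [apply in_or_app; right; apply in_map; auto|].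
      intros b; simpl; rewrite <- Hs'. split.
      * intros Pb. destruct (classic (h = b)); [auto | right; split; auto].
      * intros [<-|[]]; auto.
    + exists s. split; [apply in_or_app; left; auto|].
      intros b; rewrite <- Hs'. split; [|tauto]. intros Pb; split; auto. intros ->; auto.
Qed.

Lemma finite_range_subsets {A B : Type} (l : list B) (S : A -> B -> Prop) :
  (forall a b, S a b -> In b l) -> finite_range S.
Proof.
  intros HS. exists (map (fun s b => In b s) (sublists l)). intros a.
  destruct (sublist_of_pred l (S a) (HS a)) as [s [Hs Hsa]].
  replace (S a) with (fun b => In b s) by (symmetry; apply pred_ext; auto).
  apply (in_map (fun s b => In b s)); auto.
Qed.

Lemma finite_range_pair {A B C : Type} (f : A -> B) (g : A -> C) :
  finite_range f -> finite_range g -> finite_range (fun a => (f a, g a)).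
Proof. intros [l Hl] [k Hk]. exists (list_prod l k). intros a; apply in_prod; auto. Qed.

Lemma finite_range_factor {A B C : Type} (f : A -> B) (g : A -> C) :
  (forall a b, f a = f b -> g a = g b) -> finite_range f -> finite_range g.
Proof.
  intros Hfg [l Hl].
  assert (Hcover : forall l, exists k, forall a, In (f a) l -> In (g a) k).
  { induction l0 as [|h t [k Hk]].
    - exists []; intros a [].
    - destruct (classic (exists a, f a = h)) as [[a0 Ha0]|Hh].
      + exists (g a0 :: k). intros a [Ha|Ha]; [left; apply Hfg; congruence | right; auto].
      + exists k. intros a [Ha|Ha]; [exfalso; eauto | auto]. }
  destruct (Hcover l) as [k Hk]. exists k; auto.
Qed.

Lemma map_apply_eq {A B : Type} (l : list (A -> B)) (x y : A) :
  map (fun f => f x) l = map (fun f => f y) l -> forall f, In f l -> f x = f y.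
Proof.
  induction l as [|g l IH]; simpl; intros E f Hf; [destruct Hf|].
  injection E as Eg El. destruct Hf as [<-|Hf]; auto.
Qed.

Fixpoint subformulas (a : form) : list form :=
  a :: match a with
       | And b c | Or b c | Imp b c => subformulas b ++ subformulas c
       | Dia b | Box b => subformulas b
       | _ => []
       end.

Lemma subformulas_refl a : In a (subformulas a).
Proof. destruct a; simpl; auto. Qed.


Lemma ile_refl (M : model) w : ile M w w. Proof. apply (proj1 (ile_pre M)). Qed.
Lemma ile_trans (M : model) u v w : ile M u v -> ile M v w -> ile M u w.
Proof. apply (proj2 (ile_pre M)). Qed.
Lemma mle_refl (M : model) w : mle M w w. Proof. apply (proj1 (mle_pre M)). Qed.
Lemma mle_trans (M : model) u v w : mle M u v -> mle M v w -> mle M u w.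
Proof. apply (proj2 (mle_pre M)). Qed.

Lemma sat_persistent (M : model) a : forall x y, sat M x a -> ile M x y -> sat M y a.
Proof.
  induction a; simpl; intros x y Hx Hxy.
  - eapply val_up; eauto.
  - eapply wbot_up_ile; eauto.
  - destruct Hx; split; eauto.
  - destruct Hx; [left|right]; eauto.
  - intros v Hv; apply Hx; eapply ile_trans; eauto.
  - intros u Hu; apply Hx; eapply ile_trans; eauto.
  - intros u v Hu; apply Hx; eapply ile_trans; eauto.
Qed.

Lemma sat_box_here (M : model) x a : sat M x (Box a) -> sat M x a.
Proof. intros H; apply (H x x); [apply ile_refl | apply mle_refl]. Qed.

Definition box_stable (M : model) : Prop :=
  forall x y a, mle M x y -> sat M x (Box a) -> sat M y (Box a).

Lemma backward_confluent_box_stable (M : model) : backward_confluent M -> box_stable M.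
Proof.
  intros HB x y a Hxy Hx u v Hyu Huv. destruct (HB x y u Hxy Hyu) as [w [Hxw Hwu]].
  apply (Hx w v Hxw). eapply mle_trans; eauto.
Qed.

Lemma downward_confluent_box_stable (M : model) : downward_confluent M -> box_stable M.
Proof.
  intros HD x y a Hxy Hx u v Hyu Huv. destruct (HD y u v Hyu Huv) as [w [Hyw Hwv]].
  apply (sat_persistent M a w v); auto. apply (Hx x w); [apply ile_refl | eapply mle_trans; eauto].
Qed.

Lemma is_model_of_box_stable (L : logic) (M : model) : is_model_of L M -> box_stable M.
Proof.
  destruct L; simpl; intros HM.
  - apply backward_confluent_box_stable; tauto.
  - apply backward_confluent_box_stable; tauto.
  - apply downward_confluent_box_stable; tauto.
  - apply backward_confluent_box_stable; tauto.
Qed.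

Section Chains.
Variable M : model.

Definition up_chain (x : world M) (i : nat) : Prop :=
  exists c : nat -> world M, c 0 = x /\ forall j, j < i -> ilt M (c j) (c (S j)).
Definition down_chain (x : world M) (i : nat) : Prop :=
  exists c : nat -> world M, c i = x /\ forall j, j < i -> ilt M (c j) (c (S j)).

Lemma up_chain0 x : up_chain x 0.
Proof. exists (fun _ => x); split; [reflexivity | intros; lia]. Qed.

Lemma up_chain_antitone w a i : ile M w a -> up_chain a i -> up_chain w i.
Proof.
  intros Hwa [c [Hc0 Hc]].
  exists (fun j => match j with 0 => w | S k => c (S k) end). split; [reflexivity|].
  intros [|j] Hj; [|apply Hc; exact Hj].
  destruct (Hc 0 Hj) as [H1 H2]. rewrite Hc0 in H1, H2. split.
  - eapply ile_trans; eauto.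
  - intros H; apply H2; eapply ile_trans; eauto.
Qed.

Lemma up_chain_extend b w i : ilt M b w -> up_chain w i -> up_chain b (S i).
Proof.
  intros Hbw [c [Hc0 Hc]].
  exists (fun j => match j with 0 => b | S k => c k end). split; [reflexivity|].
  intros [|j] Hj; [rewrite Hc0; exact Hbw | apply Hc; lia].
Qed.

Lemma down_chain_monotone w z i : ile M w z -> down_chain w i -> down_chain z i.
Proof.
  intros Hwz [c [Hci Hc]].
  exists (fun j => if Nat.eqb j i then z else c j). split; [rewrite Nat.eqb_refl; reflexivity|].
  intros j Hj. destruct (Nat.eqb_spec j i); [lia|].
  destruct (Nat.eqb_spec (S j) i) as [<-|]; [|apply Hc; exact Hj].
  destruct (Hc j Hj) as [H1 H2]. rewrite Hci in H1, H2. split.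
  - eapply ile_trans; eauto.
  - intros H; apply H2; eapply ile_trans; eauto.
Qed.

Lemma down_chain_extend z w i : ilt M z w -> down_chain z i -> down_chain w (S i).
Proof.
  intros Hzw [c [Hci Hc]].
  exists (fun j => if Nat.eqb j (S i) then w else c j). split; [rewrite Nat.eqb_refl; reflexivity|].
  intros j Hj. destruct (Nat.eqb_spec j (S i)); [lia|].
  destruct (Nat.eqb_spec (S j) (S i)) as [E|]; [|apply Hc; lia].
  injection E as ->. rewrite Hci. exact Hzw.
Qed.

Variable N : nat.
Hypothesis height_bound : forall (n : nat) (c : nat -> world M),
  (forall i, i < n -> ilt M (c i) (c (S i))) -> n <= N.

Lemma up_chain_bounded x i : up_chain x i -> i <= N.
Proof. intros [c [_ H]]; eapply height_bound; eauto. Qed.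

Lemma down_chain_bounded x i : down_chain x i -> i <= N.
Proof. intros [c [_ H]]; eapply height_bound; eauto. Qed.

Lemma up_profile_cluster b w :
  ile M b w -> (forall i, up_chain b i -> up_chain w i) -> ile M w b.
Proof.
  intros Hbw Hprof. apply NNPP; intros Hwb.
  assert (Hall : forall i, up_chain b i).
  { induction i as [|i IH]; [apply up_chain0|].
    apply (up_chain_extend b w); [split|apply Hprof]; auto. }
  specialize (up_chain_bounded b (S N) (Hall (S N))). lia.
Qed.

Lemma down_profile_le w z : ile M w z \/ ile M z w ->
  (forall i, down_chain w i -> down_chain z i) -> ile M w z.
Proof.
  intros Hcmp Hprof. apply NNPP; intros Hwz.
  destruct Hcmp as [Hle|Hzw]; [contradiction|].
  assert (Hall : forall i, down_chain z i).
  { induction i as [|i IH]; [exists (fun _ => z); split; [reflexivity | intros; lia]|].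
    apply Hprof, (down_chain_extend z w); [split|]; auto. }
  specialize (down_chain_bounded z (S N) (Hall (S N))). lia.
Qed.

End Chains.

(* Iterated types: the n-type of x records its base label and, for every x' above x,
   the (n-1)-type of x' together with the (n-1)-types met in the interval [x, x']. *)

Fixpoint typ (A : Type) (n : nat) : Type :=
  match n with
  | 0 => A
  | S m => (A * ((typ A m * (typ A m -> Prop)) -> Prop))%type
  end.

Section Types.
Variables (M : model) (A : Type) (lam : world M -> A).

Fixpoint tp (n : nat) : world M -> typ A n :=
  match n return world M -> typ A n with
  | 0 => lam
  | S m => fun x => (lam x, fun p => exists x', ile M x x' /\
             p = (tp m x', fun q => exists w, ile M x w /\ ile M w x' /\ tp m w = q))
  end.

Definition interval_types (m : nat) (x x' : world M) : typ A m -> Prop :=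
  fun q => exists w, ile M x w /\ ile M w x' /\ tp m w = q.

Definition successor_types (m : nat) (x : world M) : typ A m * (typ A m -> Prop) -> Prop :=
  fun p => exists x', ile M x x' /\ p = (tp m x', interval_types m x x').

Lemma tp_S m x : tp (S m) x = (lam x, successor_types m x).
Proof. reflexivity. Qed.

Lemma tp_base n x y : tp n x = tp n y -> lam x = lam y.
Proof. destruct n; simpl; intros H; [exact H | exact (f_equal fst H)]. Qed.

Lemma successor_types_cluster m x y :
  ile M x y -> ile M y x -> successor_types m x = successor_types m y.
Proof.
  intros Hxy Hyx.
  assert (Hint : forall x', interval_types m x x' = interval_types m y x').
  { intros x'. apply pred_ext; intros q.
    split; intros [w [H1 [H2 H3]]]; exists w; repeat split; auto; eapply ile_trans; eauto. }
  apply pred_ext; intros p.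
  split; intros [x' [H ->]]; exists x'; rewrite Hint; split; auto; eapply ile_trans; eauto.
Qed.

Definition lifts (m : nat) (a b : world M) : Prop :=
  forall w w', ile M a w -> ile M b w' -> tp m w = tp m w' -> tp (S m) w = tp (S m) w'.

Lemma lifts_sym m a b : lifts m a b -> lifts m b a.
Proof. intros H w w' Hw Hw' E; symmetry; apply H; auto. Qed.

Lemma interval_types_lift_incl m a b x' y' : lifts m a b ->
  interval_types m a x' = interval_types m b y' ->
  forall q, interval_types (S m) a x' q -> interval_types (S m) b y' q.
Proof.
  intros Hl E q [w [Haw [Hwx <-]]].
  assert (Hw : interval_types m b y' (tp m w)) by (rewrite <- E; exists w; auto).
  destruct Hw as [w' [Hbw' [Hw'y Ew']]].
  exists w'; repeat split; auto. symmetry; apply Hl; auto.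
Qed.

Lemma successor_types_lift_incl m a b : lifts m a b ->
  successor_types m a = successor_types m b ->
  forall p, successor_types (S m) a p -> successor_types (S m) b p.
Proof.
  intros Hl E p [x' [Hax' ->]].
  assert (Hp : successor_types m b (tp m x', interval_types m a x'))
    by (rewrite <- E; exists x'; auto).
  destruct Hp as [y' [Hby' Ep]].
  exists y'; split; auto. f_equal.
  - apply Hl; auto. exact (f_equal fst Ep).
  - apply pred_ext; intros q; split.
    + apply (interval_types_lift_incl m a b); auto. exact (f_equal snd Ep).
    + apply (interval_types_lift_incl m b a); auto using lifts_sym. exact (eq_sym (f_equal snd Ep)).
Qed.

Variable N : nat.
Hypothesis height_bound : forall (n : nat) (c : nat -> world M),
  (forall i, i < n -> ilt M (c i) (c (S i))) -> n <= N.
Hypothesis lam_up_profile : forall x y, lam x = lam y -> forall i, up_chain M x i -> up_chain M y i.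

Lemma tp_stable k : forall a, ~ up_chain M a k -> forall m, k <= m ->
  forall b, tp m a = tp m b -> tp (S m) a = tp (S m) b.
Proof.
  induction k as [|k IH]; intros a Ha m Hkm b Hab; [exfalso; apply Ha, up_chain0|].
  destruct m as [|m]; [lia|].
  assert (Hlam : lam a = lam b) by exact (tp_base _ _ _ Hab).
  assert (Hsucc : successor_types m a = successor_types m b) by exact (f_equal snd Hab).
  assert (Hlift : lifts m a b).
  { intros w w' Haw Hbw' Ew. destruct (classic (ile M w a)) as [Hwa|Hwa].
    - (* w lies in the cluster of a, hence w' lies in that of b *)
      assert (Hlw : lam w = lam w') by exact (tp_base _ _ _ Ew).
      assert (Hw'b : ile M w' b).
      { apply (up_profile_cluster M N height_bound); auto. intros i Hi.
        apply (lam_up_profile w w' Hlw), (up_chain_antitone M w a), (lam_up_profile b a); auto. }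
      rewrite !tp_S, <- (successor_types_cluster m a w), <- (successor_types_cluster m b w'),
        Hlw, Hsucc; auto.
    - (* w is strictly above a, so no strict chain of length k starts at w *)
      apply (IH w); [|lia|exact Ew].
      intros Hk. apply Ha, (up_chain_extend M a w); [split|]; auto. }
  rewrite !tp_S. f_equal; [exact Hlam|].
  apply pred_ext; intros p; split.
  - apply (successor_types_lift_incl m a b); auto.
  - apply (successor_types_lift_incl m b a); auto using lifts_sym.
Qed.

Lemma tp_zig x y x' : tp (S N) x = tp (S N) y -> ile M x x' ->
  exists y', ile M y y' /\ tp (S N) y' = tp (S N) x' /\
             interval_types (S N) y y' = interval_types (S N) x x'.
Proof.
  intros E Hxx'.
  assert (E' : tp (S (S N)) x = tp (S (S N)) y).
  { apply (tp_stable (S N)); auto. intros H. apply (up_chain_bounded M N height_bound) in H. lia. }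
  assert (Hsucc : successor_types (S N) x = successor_types (S N) y) by exact (f_equal snd E').
  assert (Hp : successor_types (S N) y (tp (S N) x', interval_types (S N) x x'))
    by (rewrite <- Hsucc; exists x'; auto).
  destruct Hp as [y' [Hyy' Ep]].
  exists y'; split; [exact Hyy' | split; symmetry; [exact (f_equal fst Ep) | exact (f_equal snd Ep)]].
Qed.

Lemma tp_finite_range : finite_range lam -> forall n, finite_range (tp n).
Proof.
  intros Hlam n; induction n as [|m [l Hl]]; [exact Hlam|].
  destruct (finite_range_subsets l (fun xx => interval_types m (fst xx) (snd xx))) as [k Hk].
  { intros xx q [w [_ [_ <-]]]; apply Hl. }
  apply (finite_range_pair lam (successor_types m)); [exact Hlam|].
  apply (finite_range_subsets (list_prod l k)).
  intros x p [x' [_ ->]]. apply in_prod; [apply Hl | apply (Hk (x, x'))].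
Qed.

End Types.

Definition reaches (M : model) (x : world M) (c : form) : Prop :=
  exists v, mle M x v /\ sat M v c.

Definition agree (M : model) (phi : form) (x y : world M) : Prop :=
  (wbot M x <-> wbot M y) /\ forall c, In c (subformulas phi) ->
    (sat M x c <-> sat M y c) /\ (reaches M x c <-> reaches M y c).

Definition zig (M : model) {TT : Type} (cl : world M -> TT) : Prop :=
  forall x y x', cl x = cl y -> ile M x x' -> exists y', ile M y y' /\ cl y' = cl x'.
Definition zag (M : model) {TT : Type} (cl : world M -> TT) : Prop :=
  forall x y z, cl x = cl y -> ile M z x -> exists z', ile M z' y /\ cl z' = cl z.

Section Quotient.
Variables (M : model) (phi : form) (TT : Type) (cl : world M -> TT).

Definition qworld : Type := {t : TT | exists x, cl x = t}.
Definition cls (x : world M) : qworld := exist _ (cl x) (ex_intro _ x eq_refl).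

Lemma cls_surj (t : qworld) : exists x, t = cls x.
Proof. destruct t as [t [x <-]]. exists x. reflexivity. Qed.

Lemma cls_eq x y : cl x = cl y -> cls x = cls y.
Proof. intros E. apply subset_eq_compat, E. Qed.

Lemma cls_inj x y : cls x = cls y -> cl x = cl y.
Proof. intros E; exact (f_equal (@proj1_sig _ _) E). Qed.

Definition qile (t u : qworld) : Prop := forall x, cls x = t -> exists y, ile M x y /\ cls y = u.
Definition qbot (t : qworld) : Prop := exists x, cls x = t /\ wbot M x.
Definition qval (p : nat) (t : qworld) : Prop := exists x, cls x = t /\ val M p x.

(* y may serve as a modal successor of x as far as phi is concerned. *)
Definition admissible (x y : world M) : Prop :=
  (wbot M x -> wbot M y) /\
  (forall a, In (Box a) (subformulas phi) -> sat M x (Box a) -> sat M y (Box a)) /\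
  (forall c, In c (subformulas phi) -> reaches M y c -> reaches M x c).

Definition qadmissible (t s : qworld) : Prop :=
  forall x y, cls x = t -> cls y = s -> admissible x y.

Definition qbc (Q : qworld -> qworld -> Prop) : Prop :=
  forall t s s', Q t s -> qile s s' -> exists t', qile t t' /\ Q t' s'.
Definition qfc (Q : qworld -> qworld -> Prop) : Prop :=
  forall t t' s, qile t t' -> Q t s -> exists s', qile s s' /\ Q t' s'.
Definition qdc (Q : qworld -> qworld -> Prop) : Prop :=
  forall t u v, qile t u -> Q u v -> exists w, Q t w /\ qile w v.

Definition inherits_confluence (Q : qworld -> qworld -> Prop) : Prop :=
  (backward_confluent M -> qbc Q) /\ (forward_confluent M -> qfc Q) /\
  (downward_confluent M -> zag M cl -> qdc Q).

(* The modal order of the quotient: the union of all relations inside equality-or-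
   admissibility that inherit the confluence properties of M. This makes it a
   preorder with the required confluence by construction. *)
Definition qmle (t s : qworld) : Prop :=
  exists Q, (forall a b, Q a b -> a = b \/ qadmissible a b) /\ inherits_confluence Q /\ Q t s.

Lemma qile_pre : preorder qile.
Proof.
  split.
  - intros t x Hx; exists x; split; auto using ile_refl.
  - intros t u v H1 H2 x Hx. destruct (H1 x Hx) as [y [Hxy Hy]].
    destruct (H2 y Hy) as [z [Hyz Hz]]. exists z; split; auto. eapply ile_trans; eauto.
Qed.

Lemma admissible_trans x y z : admissible x y -> admissible y z -> admissible x z.
Proof.
  intros [B1 [X1 R1]] [B2 [X2 R2]]. split; [|split]; auto.
Qed.

Lemma qadmissible_trans t s r : qadmissible t s -> qadmissible s r -> qadmissible t r.
Proof.
  intros H1 H2 x z Hx Hz. destruct (cls_surj s) as [y Hy].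
  apply admissible_trans with y; auto.
Qed.

Definition rel_comp (Q1 Q2 : qworld -> qworld -> Prop) (a c : qworld) : Prop :=
  exists b, Q1 a b /\ Q2 b c.

Lemma inherits_confluence_comp Q1 Q2 :
  inherits_confluence Q1 -> inherits_confluence Q2 -> inherits_confluence (rel_comp Q1 Q2).
Proof.
  intros [A1 [A2 A3]] [B1 [B2 B3]]. repeat split.
  - intros HB t s s' [m [H1 H2]] H3.
    destruct (B1 HB m s s' H2 H3) as [m' [H4 H5]]. destruct (A1 HB t m m' H1 H4) as [t' [H6 H7]].
    exists t'; split; auto; exists m'; auto.
  - intros HF t t' s H1 [m [H2 H3]].
    destruct (A2 HF t t' m H1 H2) as [m' [H4 H5]]. destruct (B2 HF m m' s H4 H3) as [s' [H6 H7]].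
    exists s'; split; auto; exists m'; auto.
  - intros HD HZ t u v H1 [m [H2 H3]].
    destruct (A3 HD HZ t u m H1 H2) as [w1 [H4 H5]].
    destruct (B3 HD HZ w1 m v H5 H3) as [w2 [H6 H7]].
    exists w2; split; auto; exists w1; auto.
Qed.

Lemma inherits_confluence_eq : inherits_confluence eq.
Proof.
  repeat split.
  - intros _ t s s' <- H; exists s'; auto.
  - intros _ t t' s H <-; exists t'; auto.
  - intros _ _ t u v H <-; exists t; auto.
Qed.

Lemma qmle_pre : preorder qmle.
Proof.
  split.
  - intros t. exists eq. split; [intros a b H; left; exact H | split; [apply inherits_confluence_eq | reflexivity]].
  - intros t s r [Q1 [H1 [C1 Q1ts]]] [Q2 [H2 [C2 Q2sr]]].
    exists (rel_comp Q1 Q2). split; [|split; [apply inherits_confluence_comp; auto | exists s; auto]].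
    intros a c [b [Hab Hbc]].
    destruct (H1 _ _ Hab) as [<-|Aab]; destruct (H2 _ _ Hbc) as [<-|Abc]; auto.
    right; eapply qadmissible_trans; eauto.
Qed.

Lemma qbot_up_ile t u : qbot t -> qile t u -> qbot u.
Proof.
  intros [x [Hx Hb]] H. destruct (H x Hx) as [y [Hxy Hy]].
  exists y; split; auto. eapply wbot_up_ile; eauto.
Qed.

Lemma qbot_up_mle t s : qbot t -> qmle t s -> qbot s.
Proof.
  intros [x [Hx Hb]] [Q [HQ [_ Hts]]]. destruct (HQ _ _ Hts) as [<-|Hadm].
  - exists x; auto.
  - destruct (cls_surj s) as [y ->]. exists y; split; auto. apply (Hadm x y); auto.
Qed.

Lemma qval_up p t u : qval p t -> qile t u -> qval p u.
Proof.
  intros [x [Hx Hv]] H. destruct (H x Hx) as [y [Hxy Hy]].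
  exists y; split; auto. eapply val_up; eauto.
Qed.

Lemma qval_bot p t : qbot t -> qval p t.
Proof. intros [x [Hx Hb]]; exists x; split; auto. apply val_bot; auto. Qed.

Definition quotient : model :=
  Model qworld qbot qile qmle qval qile_pre qmle_pre qbot_up_ile qbot_up_mle qval_up qval_bot.

Lemma quotient_finite : finite_range cl -> finite_model quotient.
Proof.
  intros Hfin. destruct (finite_range_factor cl cls cls_eq Hfin) as [l Hl].
  exists l. intros t. destruct (cls_surj t) as [x ->]. apply Hl.
Qed.

Hypothesis cl_zig : zig M cl.

Lemma qile_cls x y : ile M x y -> qile (cls x) (cls y).
Proof.
  intros Hxy x0 E. destruct (cl_zig x x0 y) as [y0 [Hy0 Ey0]]; [symmetry; apply cls_inj; auto | auto |].
  exists y0; split; auto. apply cls_eq; auto.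
Qed.

Lemma qile_cls_inv x u : qile (cls x) u -> exists y, ile M x y /\ u = cls y.
Proof. intros H. destruct (H x eq_refl) as [y [Hxy <-]]. eauto. Qed.

Definition qimage (t s : qworld) : Prop := exists x y, cls x = t /\ cls y = s /\ mle M x y.

Lemma qimage_confluence : inherits_confluence qimage.
Proof.
  repeat split.
  - intros HB t s s' [x [y [<- [<- Hxy]]]] Hs.
    destruct (qile_cls_inv _ _ Hs) as [y' [Hyy' ->]].
    destruct (HB x y y' Hxy Hyy') as [x' [Hxx' Hx'y']].
    exists (cls x'). split; [apply qile_cls; auto | exists x', y'; auto].
  - intros HF t t' s Ht [x [y [<- [<- Hxy]]]].
    destruct (qile_cls_inv _ _ Ht) as [x' [Hxx' ->]].
    destruct (HF x x' y Hxx' Hxy) as [y' [Hyy' Hx'y']].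
    exists (cls y'). split; [apply qile_cls; auto | exists x', y'; auto].
  - intros HD HZ t u v Htu [x [y [<- [<- Hxy]]]].
    destruct (cls_surj t) as [z ->]. destruct (qile_cls_inv _ _ Htu) as [x1 [Hzx1 E]].
    destruct (HZ x1 x z) as [z' [Hz'x Ez']]; [apply cls_inj; auto | auto |].
    destruct (HD z' x y Hz'x Hxy) as [w [Hz'w Hwy]].
    exists (cls w). split; [exists z', w; split; [apply cls_eq|]; auto | apply qile_cls; auto].
Qed.

Lemma quotient_bc : backward_confluent M -> backward_confluent quotient.
Proof.
  intros HB t s s' [Q [HQ [HC Hts]]] Hss'.
  destruct (proj1 HC HB t s s' Hts Hss') as [t' [H1 H2]]. exists t'; split; auto. exists Q; auto.
Qed.

Lemma quotient_fc : forward_confluent M -> forward_confluent quotient.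
Proof.
  intros HF t t' s Htt' [Q [HQ [HC Hts]]].
  destruct (proj1 (proj2 HC) HF t t' s Htt' Hts) as [s' [H1 H2]]. exists s'; split; auto. exists Q; auto.
Qed.

Lemma quotient_dc : downward_confluent M -> zag M cl -> downward_confluent quotient.
Proof.
  intros HD HZ t u v Htu [Q [HQ [HC Huv]]].
  destruct (proj2 (proj2 HC) HD HZ t u v Htu Huv) as [w [H1 H2]]. exists w; split; auto. exists Q; auto.
Qed.

Lemma quotient_infallible : infallible M -> infallible quotient.
Proof. intros H t [x [_ Hx]]; apply (H x Hx). Qed.

Lemma quotient_ll : locally_linear M -> locally_linear quotient.
Proof.
  intros HL t u v Htu Htv. destruct (cls_surj t) as [x ->].
  destruct (qile_cls_inv _ _ Htu) as [y [Hxy ->]]. destruct (qile_cls_inv _ _ Htv) as [z [Hxz ->]].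
  destruct (HL x y z Hxy Hxz); [left|right]; apply qile_cls; auto.
Qed.

Hypothesis cl_agree : forall x y, cl x = cl y -> agree M phi x y.
Hypothesis M_box_stable : box_stable M.

Lemma agree_bot x y : cl x = cl y -> wbot M x -> wbot M y.
Proof. intros E; apply (cl_agree x y E). Qed.

Lemma agree_sat x y c : cl x = cl y -> In c (subformulas phi) -> sat M x c -> sat M y c.
Proof. intros E Hc; apply (proj2 (cl_agree x y E) c Hc). Qed.

Lemma agree_reaches x y c : cl x = cl y -> In c (subformulas phi) -> reaches M x c -> reaches M y c.
Proof. intros E Hc; apply (proj2 (cl_agree x y E) c Hc). Qed.

Lemma admissible_of_mle x y : mle M x y -> admissible x y.
Proof.
  intros Hxy. split; [|split].
  - intros Hx; eapply wbot_up_mle; eauto.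
  - intros a _ Hx. eapply M_box_stable; eauto.
  - intros c _ [v [Hyv Hv]]. exists v; split; auto. eapply mle_trans; eauto.
Qed.

Lemma admissible_transfer x y x' y' :
  cl x = cl x' -> cl y = cl y' -> admissible x y -> admissible x' y'.
Proof.
  intros Ex Ey [B [X R]]. split; [|split].
  - intros Hx'. apply (agree_bot y y'), B, (agree_bot x' x); auto.
  - intros a Ha Hx'. apply (agree_sat y y'), X, (agree_sat x' x); auto.
  - intros c Hc Hy'. apply (agree_reaches x x'), R, (agree_reaches y' y); auto.
Qed.

Lemma qmle_cls x y : mle M x y -> qmle (cls x) (cls y).
Proof.
  intros Hxy. exists qimage. split; [|split; [apply qimage_confluence | exists x, y; auto]].
  intros a b [x0 [y0 [<- [<- H0]]]]. right. intros x1 y1 E1 E2.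
  apply (admissible_transfer x0 y0); [apply cls_inj; auto | apply cls_inj; auto | apply admissible_of_mle; auto].
Qed.

Lemma qmle_cls_inv x y : qmle (cls x) (cls y) -> admissible x y \/ cl x = cl y.
Proof.
  intros [Q [HQ [_ Hxy]]]. destruct (HQ _ _ Hxy) as [E|Hadm]; [right; apply cls_inj; auto | left; auto].
Qed.

Lemma truth_imp c1 c2 :
  (forall y, sat quotient (cls y) c1 <-> sat M y c1) ->
  (forall y, sat quotient (cls y) c2 <-> sat M y c2) ->
  forall x, sat quotient (cls x) (Imp c1 c2) <-> sat M x (Imp c1 c2).
Proof.
  intros IH1 IH2 x. simpl. split.
  - intros H v Hxv Hv. apply IH2, H; [apply qile_cls | apply IH1]; auto.
  - intros H v Hxv Hv. destruct (qile_cls_inv _ _ Hxv) as [y [Hxy ->]].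
    apply IH2, H, IH1; auto.
Qed.

Lemma truth_dia c : In c (subformulas phi) ->
  (forall y, sat quotient (cls y) c <-> sat M y c) ->
  forall x, sat quotient (cls x) (Dia c) <-> sat M x (Dia c).
Proof.
  intros Hc IH x. simpl. split.
  - intros H u Hxu. destruct (H (cls u) (qile_cls _ _ Hxu)) as [v [Huv Hv]].
    destruct (cls_surj v) as [y ->]. apply IH in Hv.
    assert (Hy : reaches M y c) by (exists y; split; auto using mle_refl).
    destruct (qmle_cls_inv _ _ Huv) as [[_ [_ R]] | E].
    + apply (R c Hc Hy).
    + apply (agree_reaches y u); auto.
  - intros H u Hxu. destruct (qile_cls_inv _ _ Hxu) as [y [Hxy ->]].
    destruct (H y Hxy) as [v [Hyv Hv]].
    exists (cls v); split; [apply qmle_cls | apply IH]; auto.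
Qed.

Lemma truth_box c : In (Box c) (subformulas phi) -> In c (subformulas phi) ->
  (forall y, sat quotient (cls y) c <-> sat M y c) ->
  forall x, sat quotient (cls x) (Box c) <-> sat M x (Box c).
Proof.
  intros Hbc Hc IH x. split.
  - intros H u v Hxu Huv. apply IH, (H (cls u) (cls v)); [apply qile_cls | apply qmle_cls]; auto.
  - intros H u v Hxu Huv. destruct (qile_cls_inv _ _ Hxu) as [y [Hxy ->]].
    destruct (cls_surj v) as [z ->]. apply IH.
    assert (Hy : sat M y (Box c)) by (apply (sat_persistent M (Box c) x y); auto).
    destruct (qmle_cls_inv _ _ Huv) as [[_ [X _]] | E].
    + apply sat_box_here, (X c); auto.
    + apply (agree_sat y z); auto. apply sat_box_here; auto.
Qed.

Lemma quotient_truth c : incl (subformulas c) (subformulas phi) ->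
  forall x, sat quotient (cls x) c <-> sat M x c.
Proof.
  induction c as [p| |c1 IH1 c2 IH2|c1 IH1 c2 IH2|c1 IH1 c2 IH2|c IH|c IH]; intros Hc;
  pose proof (Hc _ (subformulas_refl _)) as Hin;
  try (specialize (IH1 ltac:(intros d Hd; apply Hc; simpl; auto using in_or_app));
       specialize (IH2 ltac:(intros d Hd; apply Hc; simpl; auto using in_or_app)));
  try specialize (IH ltac:(intros d Hd; apply Hc; simpl; auto));
  intros x.
  - split; [intros [x0 [E Hv]] | intros Hv; exists x; auto].
    apply (agree_sat x0 x (Var p)); auto. apply cls_inj; auto.
  - split; [intros [x0 [E Hb]] | intros Hb; exists x; auto].
    apply (agree_bot x0 x); auto. apply cls_inj; auto.
  - simpl; rewrite IH1, IH2. tauto.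
  - simpl; rewrite IH1, IH2. tauto.
  - apply truth_imp; auto.
  - apply truth_dia; auto. apply Hc; simpl; auto using subformulas_refl.
  - apply truth_box; auto. apply Hc; simpl; auto using subformulas_refl.
Qed.

Lemma cls_not_bot x : ~ wbot M x -> ~ wbot quotient (cls x).
Proof. intros Hx [x0 [E Hb]]. apply Hx, (agree_bot x0 x); auto. apply cls_inj; auto. Qed.

Lemma quotient_satisfiable : satisfiable M phi -> satisfiable quotient phi.
Proof.
  intros [x [Hx Hs]]. exists (cls x). split; [apply cls_not_bot; auto|].
  apply quotient_truth; auto using incl_refl.
Qed.

Lemma quotient_falsifiable : falsifiable M phi -> falsifiable quotient phi.
Proof.
  intros [x [Hx Hs]]. exists (cls x). split; [apply cls_not_bot; auto|].
  rewrite quotient_truth; auto using incl_refl.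
Qed.

End Quotient.

Lemma quotient_is_model_of (L : logic) (M : model) phi TT (cl : world M -> TT) :
  zig M cl -> (L = S4I -> zag M cl) -> is_model_of L M -> is_model_of L (quotient M phi TT cl).
Proof.
  intros Hzig Hzag HM. destruct L; simpl in *.
  - apply quotient_bc; auto.
  - destruct HM as [Hi [Hf Hb]].
    repeat split; [apply quotient_infallible | apply quotient_fc | apply quotient_bc]; auto.
  - destruct HM as [Hi [Hf Hd]].
    repeat split; [apply quotient_infallible | apply quotient_fc | apply quotient_dc]; auto.
  - destruct HM as [[Hi [Hf Hb]] Hl].
    repeat split; [apply quotient_infallible | apply quotient_fc | apply quotient_bc | apply quotient_ll];
    auto.
Qed.

Lemma filtration (L : logic) (M : model) phi TT (cl : world M -> TT) :
  is_model_of L M -> zig M cl -> (L = S4I -> zag M cl) ->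
  (forall x y, cl x = cl y -> agree M phi x y) -> finite_range cl ->
  exists M', is_model_of L M' /\ finite_model M' /\
    (satisfiable M phi -> satisfiable M' phi) /\ (falsifiable M phi -> falsifiable M' phi).
Proof.
  intros HM Hzig Hzag Hagree Hfin. pose proof (is_model_of_box_stable L M HM) as Hbox.
  exists (quotient M phi TT cl). split; [apply quotient_is_model_of; auto|].
  split; [apply quotient_finite; auto|].
  split; [apply quotient_satisfiable | apply quotient_falsifiable]; auto.
Qed.

Section Labels.
Variables (M : model) (N : nat) (phi : form).
Hypothesis height_bound : forall (n : nat) (c : nat -> world M),
  (forall i, i < n -> ilt M (c i) (c (S i))) -> n <= N.

Definition label_preds : list (world M -> Prop) :=
  (fun x => wbot M x) :: map (fun c x => sat M x c) (subformulas phi) ++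
  map (fun c x => reaches M x c) (subformulas phi) ++
  map (fun i x => up_chain M x i) (seq 0 (S N)) ++
  map (fun i x => down_chain M x i) (seq 0 (S N)).

Definition label (x : world M) : list Prop := map (fun P => P x) label_preds.

Lemma label_eq x y : label x = label y -> forall P, In P label_preds -> (P x <-> P y).
Proof. intros E P HP. rewrite (map_apply_eq label_preds x y E P HP). tauto. Qed.

Lemma label_agree x y : label x = label y -> agree M phi x y.
Proof.
  intros E. split; [apply (label_eq x y E (fun x => wbot M x)); left; reflexivity|].
  intros c Hc. split.
  - apply (label_eq x y E (fun x => sat M x c)). right. rewrite !in_app_iff. left.
    apply (in_map (fun c x => sat M x c)); auto.
  - apply (label_eq x y E (fun x => reaches M x c)). right. rewrite !in_app_iff. right; left.
    apply (in_map (fun c x => reaches M x c)); auto.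
Qed.

Lemma label_up_profile x y : label x = label y -> forall i, up_chain M x i -> up_chain M y i.
Proof.
  intros E i Hx. pose proof (up_chain_bounded M N height_bound x i Hx) as Hi.
  apply (label_eq x y E (fun x => up_chain M x i)); auto.
  right. rewrite !in_app_iff. right; right; left.
  apply (in_map (fun i x => up_chain M x i)), in_seq. lia.
Qed.

Lemma label_down_profile x y : label x = label y -> forall i, down_chain M x i -> down_chain M y i.
Proof.
  intros E i Hx. pose proof (down_chain_bounded M N height_bound x i Hx) as Hi.
  apply (label_eq x y E (fun x => down_chain M x i)); auto.
  right. rewrite !in_app_iff. right; right; right.
  apply (in_map (fun i x => down_chain M x i)), in_seq. lia.
Qed.

Definition cl1 (x : world M) : typ (list Prop) (S N) := tp M _ label (S N) x.

Lemma cl1_zig : zig M cl1.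
Proof.
  intros x y x' E Hxx'.
  destruct (tp_zig M _ label N height_bound label_up_profile x y x' E Hxx') as [y' [Hyy' [E' _]]].
  eauto.
Qed.

Lemma cl1_agree x y : cl1 x = cl1 y -> agree M phi x y.
Proof. intros E. apply label_agree, (tp_base M _ label (S N)), E. Qed.

Lemma cl1_finite : finite_range cl1.
Proof. apply tp_finite_range, finite_range_truth_vector. Qed.

Definition lower_types (x : world M) : typ (list Prop) (S N) -> Prop :=
  fun q => exists z, ile M z x /\ cl1 z = q.

Definition cl2 (x : world M) := (cl1 x, lower_types x).

Lemma cl2_agree x y : cl2 x = cl2 y -> agree M phi x y.
Proof. intros E. apply cl1_agree, (f_equal fst E). Qed.

Lemma cl2_finite : finite_range cl2.
Proof.
  destruct cl1_finite as [l Hl]. apply finite_range_pair; [exists l; exact Hl|].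
  apply (finite_range_subsets l). intros x q [z [_ <-]]; apply Hl.
Qed.

Hypothesis forest : forest_like M.

(* In a forest, a world below y' lies below y or in the interval [y, y']. *)
Lemma lower_types_forth x y x' y' : lower_types x = lower_types y -> ile M x x' -> ile M y y' ->
  interval_types M _ label (S N) y y' = interval_types M _ label (S N) x x' ->
  forall q, lower_types y' q -> lower_types x' q.
Proof.
  intros El Hxx' Hyy' Ei q [z [Hzy' <-]].
  destruct (forest y' z y Hzy' Hyy') as [Hzy|Hyz].
  - assert (Hq : lower_types x (cl1 z)) by (rewrite El; exists z; auto).
    destruct Hq as [z' [Hz'x E]]. exists z'; split; [eapply ile_trans; eauto | exact E].
  - assert (Hq : interval_types M _ label (S N) x x' (cl1 z)) by (rewrite <- Ei; exists z; auto).
    destruct Hq as [w [_ [Hwx' E]]]. exists w; auto.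
Qed.

Lemma cl2_zig : zig M cl2.
Proof.
  intros x y x' E Hxx'.
  destruct (tp_zig M _ label N height_bound label_up_profile x y x' (f_equal fst E) Hxx')
    as [y' [Hyy' [Et Ei]]].
  pose proof (f_equal snd E) as El; simpl in El.
  exists y'. split; auto. unfold cl2. f_equal; [exact Et|].
  apply pred_ext; intros q; split.
  - apply (lower_types_forth x y x' y'); auto.
  - apply (lower_types_forth y x y' x'); auto.
Qed.

(* Two worlds below x are ordered as their down-profiles are, so lower types of
   label-equal worlds below equal-labelled worlds correspond. *)
Lemma lower_types_back x y z z' : lower_types x = lower_types y -> ile M z x -> ile M z' y ->
  cl1 z' = cl1 z -> forall q, lower_types z' q -> lower_types z q.
Proof.
  intros El Hzx Hz'y E q [w' [Hw'z' <-]].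
  assert (Hq : lower_types x (cl1 w')) by (rewrite El; exists w'; split; [eapply ile_trans|]; eauto).
  destruct Hq as [w [Hwx Ew]]. exists w; split; [|exact Ew].
  apply (down_profile_le M N height_bound w z (forest x w z Hwx Hzx)).
  intros i Hi.
  apply (label_down_profile z' z), (down_chain_monotone M w' z'), (label_down_profile w w'); auto;
  apply (tp_base M _ label (S N)); auto.
Qed.

Lemma cl2_zag : zag M cl2.
Proof.
  intros x y z E Hzx. pose proof (f_equal snd E) as El; simpl in El.
  assert (Hq : lower_types y (cl1 z)) by (rewrite <- El; exists z; auto).
  destruct Hq as [z' [Hz'y Ez']]. exists z'; split; auto.
  unfold cl2. rewrite Ez'. f_equal.
  apply pred_ext; intros q; split.
  - apply (lower_types_back x y z z'); auto.
  - apply (lower_types_back y x z' z); auto.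
Qed.

End Labels.

Lemma finite_model_property (L : logic) (phi : form) (M : model) :
  is_model_of L M -> shallow M -> (L = S4I -> forest_like M) ->
  exists M', is_model_of L M' /\ finite_model M' /\
    (satisfiable M phi -> satisfiable M' phi) /\ (falsifiable M phi -> falsifiable M' phi).
Proof.
  intros HM [N Hbound] Hforest. destruct (classic (L = S4I)) as [HL|HL].
  - apply (filtration L M phi _ (cl2 M N phi)); auto.
    + apply cl2_zig; auto.
    + intros _; apply cl2_zag; auto.
    + apply cl2_agree.
    + apply cl2_finite; auto.
  - apply (filtration L M phi _ (cl1 M N phi)); auto.
    + apply cl1_zig; auto.
    + intros E; contradiction.
    + apply cl1_agree.
    + apply cl1_finite.
Qed.

Theorem mainTheorem5 :
  forall (L : logic) (phi : form),
    (L <> S4I ->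
      (forall M : model, is_model_of L M -> shallow M -> satisfiable M phi ->
         exists M' : model, is_model_of L M' /\ finite_model M' /\ satisfiable M' phi) /\
      (forall M : model, is_model_of L M -> shallow M -> falsifiable M phi ->
         exists M' : model, is_model_of L M' /\ finite_model M' /\ falsifiable M' phi)) /\
    (L = S4I ->
      (forall M : model, is_model_of S4I M -> shallow M -> forest_like M ->
         satisfiable M phi ->
         exists M' : model, is_model_of S4I M' /\ finite_model M' /\ satisfiable M' phi) /\
      (forall M : model, is_model_of S4I M -> shallow M -> forest_like M ->
         falsifiable M phi ->
         exists M' : model, is_model_of S4I M' /\ finite_model M' /\ falsifiable M' phi)).
Proof.
  intros L phi. split; intros HL; split.
  - intros M HM Hs Hw.
    destruct (finite_model_property L phi M HM Hs (fun E => False_ind _ (HL E)))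
      as [M' [H1 [H2 [H3 _]]]]; eauto.
  - intros M HM Hs Hw.
    destruct (finite_model_property L phi M HM Hs (fun E => False_ind _ (HL E)))
      as [M' [H1 [H2 [_ H3]]]]; eauto.
  - intros M HM Hs Hf Hw.
    destruct (finite_model_property S4I phi M HM Hs (fun _ => Hf)) as [M' [H1 [H2 [H3 _]]]]; eauto.
  - intros M HM Hs Hf Hw.
    destruct (finite_model_property S4I phi M HM Hs (fun _ => Hf)) as [M' [H1 [H2 [_ H3]]]]; eauto.
Qed.
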